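(* Let $(X,d_X)$ be an ultrametric space and let $Y$ be any separable metrizable space. Then a function $f: X \to Y$ is of Baire class $1$ if and only if $f$ is the pointwise limit of a sequence of full functions from $X$ to $Y$.
   Context: Work in ZF plus countable choice over the reals. A function $f:X\to Y$ between metrizable spaces is of Baire class $1$ if $f^{-1}(U)\in\mathbf{\Sigma}^0_2(X)$ for every open $U\subseteq Y$. In an ultrametric space $(X,d_X)$, a set $A\subseteq X$ is full with constant $r>0$ if for every $x\in A$ the open ball $B(x,r)=\{y\in X: d_X(x,y)<r\}$ is contained in $A$; $A$ is full if it is full with some constant $r>0$. A function $f:X\to Y$ is full if it takes only finitely many values and the preimage of each of these values is a full subset of $X$. *)

From Stdlib Require Import Reals List.
Open Scope R_scope.

Section MetricDefs.
Context {T : Type} (d : T -> T -> R).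

Definition is_metric : Prop :=
  (forall x y, d x y = 0 <-> x = y) /\
  (forall x y, d x y = d y x) /\
  (forall x y z, d x z <= d x y + d y z).

Definition is_ultrametric : Prop :=
  is_metric /\ (forall x y z, d x z <= Rmax (d x y) (d y z)).

Definition open_in (U : T -> Prop) : Prop :=
  forall x, U x -> exists r, 0 < r /\ forall y, d x y < r -> U y.

Definition closed_in (C : T -> Prop) : Prop :=
  open_in (fun x => ~ C x).

Definition Sigma02 (A : T -> Prop) : Prop :=
  exists C : nat -> T -> Prop,
    (forall n, closed_in (C n)) /\ (forall x, A x <-> exists n, C n x).

Definition separable : Prop :=
  exists S : T -> Prop,
    (exists g : nat -> option T, forall y, S y -> exists n, g n = Some y) /\
    (forall y e, 0 < e -> exists z, S z /\ d y z < e).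

Definition full_set (A : T -> Prop) : Prop :=
  exists r, 0 < r /\ forall x, A x -> forall y, d x y < r -> A y.

End MetricDefs.

Definition baire_class1 {X Y : Type} (dX : X -> X -> R) (dY : Y -> Y -> R)
  (f : X -> Y) : Prop :=
  forall U : Y -> Prop, open_in dY U -> Sigma02 dX (fun x => U (f x)).

Definition full_fun {X Y : Type} (dX : X -> X -> R) (g : X -> Y) : Prop :=
  (exists l : list Y, forall x, In (g x) l) /\
  (forall y : Y, full_set dX (fun x => g x = y)).

Definition pointwise_limit {X Y : Type} (dY : Y -> Y -> R)
  (fs : nat -> X -> Y) (f : X -> Y) : Prop :=
  forall x e, 0 < e -> exists N : nat, forall n, (N <= n)%nat -> dY (fs n x) (f x) < e.

(* Converse: if full functions f_p converge to f, then f(x) lies in an open U iff, for some k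
   and N, every f_p(x) with p >= N stays 1/(k+1) away from the complement of U; each such
   condition defines a closed set because full functions are locally constant.

   Forward: separability and Baire class 1 give closed sets C_t and points q_t with
   d(q_t, f x) < r_t on C_t, such that every x lies in C_t with arbitrarily small r_t.  At
   stage k, x is sent to q_t for the largest t <= k such that x is 1/(k+1)-close to C_t and
   d(q_s, q_t) < 2 r_s for every s < t such that x is 1/(k+1)-close to C_s.  In an ultrametric
   space 1/(k+1)-neighbourhoods are unions of 1/(k+1)-balls, which makes the stage-k map
   full; consistency with the least t0 having x in C_t0 and r_t0 small forces convergence. *)
From Stdlib Require Import Reals List Lra Lia Classical ClassicalEpsilon Wf_nat.
From Stdlib Require Cantor.

Open Scope R_scope.

Lemma inv_INR_S_pos (k : nat) : 0 < / INR (S k).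
Proof. apply Rinv_0_lt_compat, lt_0_INR; lia. Qed.

Lemma inv_INR_S_lt (e : R) : 0 < e -> exists k : nat, / INR (S k) < e.
Proof.
  intros He. destruct (archimed_cor1 e He) as [N [HN HN0]].
  exists (pred N). replace (S (pred N)) with N by lia. exact HN.
Qed.

Lemma inv_INR_S_le (k k' : nat) : (k <= k')%nat -> / INR (S k') <= / INR (S k).
Proof. intros H. apply Rinv_le_contravar; [apply lt_0_INR | apply le_INR]; lia. Qed.

Lemma metric_nonneg {T : Type} (d : T -> T -> R) (hd : is_metric d) (x y : T) : 0 <= d x y.
Proof.
  destruct hd as [H0 [Hsym Htri]].
  pose proof (Htri x y x). rewrite (proj2 (H0 x x) eq_refl), (Hsym y x) in *. lra.
Qed.

Lemma Sigma02_of_double_union {T : Type} (d : T -> T -> R) (A : T -> Prop)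
  (C : nat -> nat -> T -> Prop) :
  (forall k N, closed_in d (C k N)) -> (forall x, A x <-> exists k N, C k N x) ->
  Sigma02 d A.
Proof.
  intros HC HA.
  exists (fun n => C (fst (Cantor.of_nat n)) (snd (Cantor.of_nat n))).
  split; [intros n; apply HC|].
  intros x. rewrite HA. split.
  - intros [k [N Hx]]. exists (Cantor.to_nat (k, N)). rewrite Cantor.cancel_of_to. exact Hx.
  - intros [n Hx]. eauto.
Qed.

Lemma open_ball {T : Type} (d : T -> T -> R) (hd : is_metric d) (c : T) (r : R) :
  open_in d (fun y => d c y < r).
Proof.
  destruct hd as [_ [_ Htri]]. intros y Hy.
  exists (r - d c y). split; [lra|]. intros z Hz. pose proof (Htri c y z). lra.
Qed.

Lemma separable_dense_seq {T : Type} (d : T -> T -> R) (y0 : T) :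
  separable d -> exists q : nat -> T, forall y e, 0 < e -> exists m, d y (q m) < e.
Proof.
  intros [S [[g Hg] Hdense]].
  exists (fun m => match g m with Some y => y | None => y0 end).
  intros y e He. destruct (Hdense y e He) as [z [Hz Hyz]]. destruct (Hg z Hz) as [m Hm].
  exists m. rewrite Hm. exact Hyz.
Qed.

Lemma least_witness (P : nat -> Prop) :
  (exists n, P n) -> exists n, P n /\ forall m, (m < n)%nat -> ~ P m.
Proof.
  intros HP. destruct (dec_inh_nat_subset_has_unique_least_element P (fun n => classic (P n)) HP)
    as [n [[Hn Hleast] _]].
  exists n. split; [exact Hn|]. intros m Hm HPm. specialize (Hleast m HPm). lia.
Qed.

Lemma eventually_forall_lt (P : nat -> nat -> Prop) (n : nat) :
  (forall s, (s < n)%nat -> exists K, forall k, (K <= k)%nat -> P s k) ->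
  exists K, forall s, (s < n)%nat -> forall k, (K <= k)%nat -> P s k.
Proof.
  induction n as [|n IH]; intros H.
  - exists O. intros; lia.
  - destruct IH as [K1 HK1]; [intros s Hs; apply H; lia|].
    destruct (H n ltac:(lia)) as [K2 HK2].
    exists (Nat.max K1 K2). intros s Hs k Hk.
    destruct (Nat.eq_dec s n) as [->|Hne]; [apply HK2 | apply HK1]; lia.
Qed.

Lemma closed_far_from_complement {X Y : Type} (dX : X -> X -> R) (dY : Y -> Y -> R)
  (fs : nat -> X -> Y) (U : Y -> Prop) (e : R) (N : nat) :
  (forall n, full_fun dX (fs n)) ->
  closed_in dX (fun x => forall p, (N <= p)%nat -> forall z, ~ U z -> e <= dY (fs p x) z).
Proof.
  intros Hfull x Hx.
  apply not_all_ex_not in Hx as [p Hp]. apply imply_to_and in Hp as [HpN Hp].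
  apply not_all_ex_not in Hp as [z Hz]. apply imply_to_and in Hz as [Hz Hlt].
  destruct (proj2 (Hfull p) (fs p x)) as [r [Hr Hball]].
  exists r. split; [exact Hr|]. intros y Hy Hfar.
  specialize (Hfar p HpN z Hz). rewrite (Hball x eq_refl y Hy) in Hfar. contradiction.
Qed.

Lemma full_limit_baire_class1 {X Y : Type} (dX : X -> X -> R) (dY : Y -> Y -> R)
  (hY : is_metric dY) (f : X -> Y) (fs : nat -> X -> Y) :
  (forall n, full_fun dX (fs n)) -> pointwise_limit dY fs f -> baire_class1 dX dY f.
Proof.
  intros Hfull Hlim U HU. destruct hY as [_ [Hsym Htri]].
  apply (Sigma02_of_double_union dX _
    (fun k N x => forall p, (N <= p)%nat -> forall z, ~ U z -> / INR (S k) <= dY (fs p x) z)).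
  { intros k N. exact (closed_far_from_complement dX dY fs U _ N Hfull). }
  intros x. split.
  - intros Hfx. destruct (HU _ Hfx) as [r [Hr Hball]].
    destruct (inv_INR_S_lt (r / 2)) as [k Hk]; [lra|].
    destruct (Hlim x (r / 2)) as [N HN]; [lra|].
    exists k, N. intros p Hp z Hz.
    assert (Hfz : r <= dY (f x) z).
    { apply Rnot_lt_le. intros Hl. exact (Hz (Hball z Hl)). }
    specialize (HN p Hp). rewrite Hsym in HN. pose proof (Htri (f x) (fs p x) z). lra.
  - intros [k [N Hfar]]. apply NNPP. intros HnU.
    destruct (Hlim x (/ INR (S k)) (inv_INR_S_pos k)) as [N' HN'].
    specialize (Hfar (Nat.max N N') ltac:(lia) (f x) HnU).
    specialize (HN' (Nat.max N N') ltac:(lia)). lra.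
Qed.

Fixpoint largest_below (P : nat -> Prop) (k : nat) : option nat :=
  if excluded_middle_informative (P k) then Some k
  else match k with O => None | S k' => largest_below P k' end.

Lemma largest_below_Some (P : nat -> Prop) (k t : nat) : largest_below P k = Some t ->
  (t <= k)%nat /\ P t /\ forall s, (t < s <= k)%nat -> ~ P s.
Proof.
  induction k as [|k IH]; simpl;
    destruct (excluded_middle_informative _) as [Hk|Hk]; intros E; try discriminate.
  - injection E as <-. repeat split; auto; lia.
  - injection E as <-. repeat split; auto; lia.
  - destruct (IH E) as [Htk [Ht Hmax]]. repeat split; [lia|exact Ht|].
    intros s Hs. destruct (Nat.eq_dec s (S k)) as [->|Hne]; [exact Hk|apply Hmax; lia].
Qed.

Lemma largest_below_None (P : nat -> Prop) (k : nat) : largest_below P k = None ->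
  forall s, (s <= k)%nat -> ~ P s.
Proof.
  induction k as [|k IH]; simpl;
    destruct (excluded_middle_informative _) as [Hk|Hk]; intros E s Hs; try discriminate.
  - replace s with O by lia. exact Hk.
  - destruct (Nat.eq_dec s (S k)) as [->|Hne]; [exact Hk|apply IH; [exact E|lia]].
Qed.

Lemma largest_below_ext (P Q : nat -> Prop) (k : nat) :
  (forall s, (s <= k)%nat -> (P s <-> Q s)) -> largest_below P k = largest_below Q k.
Proof.
  intros H. induction k as [|k IH]; simpl;
    destruct (excluded_middle_informative (P _)) as [HP|HP];
    destruct (excluded_middle_informative (Q _)) as [HQ|HQ];
    try reflexivity; try (exfalso; first [apply HQ, H | apply HP, H]; auto; fail).
  apply IH. intros s Hs. apply H. lia.
Qed.

Section FullApproximation.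

Variables (X Y : Type) (dX : X -> X -> R) (dY : Y -> Y -> R).
Hypotheses (hX : is_ultrametric dX) (hY : is_metric dY).
Variables (f : X -> Y) (y0 : Y) (q : nat -> Y) (r : nat -> R) (C : nat -> X -> Prop).
Hypothesis C_closed : forall t, closed_in dX (C t).
Hypothesis C_near : forall t x, C t x -> dY (q t) (f x) < r t.
Hypothesis C_fine : forall x e, 0 < e -> exists t, r t < e /\ C t x.

Definition thick (k t : nat) (x : X) : Prop := exists z, C t z /\ dX x z < / INR (S k).

Definition consistent (k : nat) (x : X) (t : nat) : Prop :=
  thick k t x /\ forall s, (s < t)%nat -> thick k s x -> dY (q s) (q t) < 2 * r s.

Definition approx (k : nat) (x : X) : Y :=
  match largest_below (consistent k x) k with Some t => q t | None => y0 end.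

Lemma thick_self k t x : C t x -> thick k t x.
Proof.
  intros Hx. exists x. split; [exact Hx|].
  rewrite (proj2 (proj1 (proj1 hX) x x) eq_refl). apply inv_INR_S_pos.
Qed.

Lemma thick_eventually_out t x : ~ C t x -> exists K, forall k, (K <= k)%nat -> ~ thick k t x.
Proof.
  intros Hx. destruct (C_closed t x Hx) as [e [He Hball]].
  destruct (inv_INR_S_lt e He) as [K HK]. exists K. intros k Hk [z [Hz Hd]].
  apply (Hball z); [|exact Hz]. pose proof (inv_INR_S_le K k Hk). lra.
Qed.

(* The ultrametric inequality makes every point of a ball its centre. *)
Lemma thick_ball k t x x' : dX x x' < / INR (S k) -> thick k t x -> thick k t x'.
Proof.
  destruct hX as [[_ [Hsym _]] Hultra]. intros Hxx' [z [Hz Hxz]].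
  exists z. split; [exact Hz|]. eapply Rle_lt_trans; [apply (Hultra x' x z)|].
  apply Rmax_lub_lt; [rewrite Hsym|]; assumption.
Qed.

Lemma consistent_ball k t x x' :
  dX x x' < / INR (S k) -> consistent k x t -> consistent k x' t.
Proof.
  intros Hxx'.
  assert (Hx'x : dX x' x < / INR (S k)) by (rewrite (proj1 (proj2 (proj1 hX))); exact Hxx').
  intros [Ht Hcons]. split; [exact (thick_ball k t x x' Hxx' Ht)|].
  intros s Hs Hs'. exact (Hcons s Hs (thick_ball k s x' x Hx'x Hs')).
Qed.

Lemma approx_ball k x x' : dX x x' < / INR (S k) -> approx k x' = approx k x.
Proof.
  intros Hxx'.
  assert (Hx'x : dX x' x < / INR (S k)) by (rewrite (proj1 (proj2 (proj1 hX))); exact Hxx').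
  unfold approx. rewrite (largest_below_ext (consistent k x') (consistent k x)); [reflexivity|].
  intros s _. split; apply consistent_ball; assumption.
Qed.

Lemma approx_full k : full_fun dX (approx k).
Proof.
  split.
  - exists (y0 :: map q (seq 0 (S k))). intros x. unfold approx.
    destruct (largest_below _ k) as [t|] eqn:E; [right|left; reflexivity].
    apply in_map, in_seq. destruct (largest_below_Some _ _ _ E). lia.
  - intros y. exists (/ INR (S k)). split; [apply inv_INR_S_pos|].
    intros x Hx x' Hxx'. rewrite <- Hx. apply approx_ball, Hxx'.
Qed.

(* t0 is the first index putting x in a closed set of radius < e; the earlier indices s with
   x in C s have r s >= e > r t0, which is what makes t0 consistent. *)
Lemma first_witness_consistent x e t0 :
  r t0 < e -> C t0 x -> (forall s, (s < t0)%nat -> ~ (r s < e /\ C s x)) ->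
  exists K, forall k, (K <= k)%nat -> consistent k x t0.
Proof.
  destruct hY as [_ [Hsym Htri]]. intros Hr0 Ht0 Hfirst.
  destruct (eventually_forall_lt (fun s k => C s x \/ ~ thick k s x) t0) as [K HK].
  { intros s Hs. destruct (classic (C s x)) as [Hc|Hc].
    - exists O. intros. left. exact Hc.
    - destruct (thick_eventually_out s x Hc) as [K HK]. exists K. intros k Hk. right. auto. }
  exists K. intros k Hk. split; [apply thick_self, Ht0|].
  intros s Hs Hthick.
  assert (Hs_in : C s x) by (destruct (HK s Hs k Hk); [assumption|contradiction]).
  assert (Hrs : e <= r s) by (apply Rnot_lt_le; intros Hlt; exact (Hfirst s Hs (conj Hlt Hs_in))).
  pose proof (C_near s x Hs_in). pose proof (C_near t0 x Ht0).
  pose proof (Htri (q s) (f x) (q t0)). rewrite (Hsym (f x) (q t0)) in *. lra.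
Qed.

Lemma approx_near_consistent k x t0 :
  C t0 x -> (t0 <= k)%nat -> consistent k x t0 -> dY (approx k x) (f x) < 3 * r t0.
Proof.
  destruct hY as [_ [Hsym Htri]]. intros Ht0 Hk Hcons.
  pose proof (C_near t0 x Ht0) as Hnear. unfold approx.
  destruct (largest_below _ k) as [t|] eqn:E.
  2: { exfalso. exact (largest_below_None _ _ E t0 Hk Hcons). }
  destruct (largest_below_Some _ _ _ E) as [Htk [[_ Hconst] Hmax]].
  destruct (Nat.lt_trichotomy t t0) as [Hlt|[->|Hgt]].
  - exfalso. exact (Hmax t0 ltac:(lia) Hcons).
  - pose proof (metric_nonneg dY hY (q t0) (f x)). lra.
  - pose proof (Hconst t0 Hgt (proj1 Hcons)). pose proof (Htri (q t) (q t0) (f x)).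
    rewrite (Hsym (q t) (q t0)) in *. lra.
Qed.

Lemma approx_limit : pointwise_limit dY approx f.
Proof.
  intros x e He.
  destruct (least_witness (fun t => r t < e / 3 /\ C t x) (C_fine x (e / 3) ltac:(lra)))
    as [t0 [[Hr0 Ht0] Hfirst]].
  destruct (first_witness_consistent x (e / 3) t0 Hr0 Ht0 Hfirst) as [K HK].
  exists (Nat.max K t0). intros k Hk.
  pose proof (approx_near_consistent k x t0 Ht0 ltac:(lia) (HK k ltac:(lia))). lra.
Qed.

End FullApproximation.

Lemma baire_class1_closed_cover {X Y : Type} (dX : X -> X -> R) (dY : Y -> Y -> R)
  (hY : is_metric dY) (hsep : separable dY) (f : X -> Y) (y0 : Y) :
  baire_class1 dX dY f ->
  exists (q : nat -> Y) (r : nat -> R) (C : nat -> X -> Prop),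
    (forall t, closed_in dX (C t)) /\
    (forall t x, C t x -> dY (q t) (f x) < r t) /\
    (forall x e, 0 < e -> exists t, r t < e /\ C t x).
Proof.
  intros hB.
  destruct (separable_dense_seq dY y0 hsep) as [qq Hdense].
  destruct (choice (fun (u : nat * nat) (Cu : nat -> X -> Prop) =>
              (forall i, closed_in dX (Cu i)) /\
              (forall x, dY (qq (fst u)) (f x) < / INR (S (snd u)) <-> exists i, Cu i x))
              (fun u => hB _ (open_ball dY hY (qq (fst u)) _))) as [Cf HCf].
  (* An index t codes a ball (centre index, radius index) and a closed piece of its preimage. *)
  set (ball_of := fun t => Cantor.of_nat (fst (Cantor.of_nat t))).
  exists (fun t => qq (fst (ball_of t))), (fun t => / INR (S (snd (ball_of t)))),
    (fun t => Cf (ball_of t) (snd (Cantor.of_nat t))).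
  split; [|split].
  - intros t. apply (proj1 (HCf _)).
  - intros t x Ht. apply (proj2 (HCf _)). eauto.
  - intros x e He.
    destruct (inv_INR_S_lt e He) as [J HJ].
    destruct (Hdense (f x) _ (inv_INR_S_pos J)) as [m Hm].
    rewrite (proj1 (proj2 hY)) in Hm.
    destruct (proj1 (proj2 (HCf (m, J)) x) Hm) as [i Hi].
    exists (Cantor.to_nat (Cantor.to_nat (m, J), i)).
    unfold ball_of. rewrite !Cantor.cancel_of_to. cbn [fst snd]. rewrite Cantor.cancel_of_to.
    split; assumption.
Qed.

Theorem mainTheorem1 (X Y : Type) (dX : X -> X -> R) (dY : Y -> Y -> R)
  (hX : is_ultrametric dX) (hY : is_metric dY) (hsep : separable dY)
  (f : X -> Y) :
  baire_class1 dX dY f <->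
  exists fs : nat -> X -> Y,
    (forall n, full_fun dX (fs n)) /\ pointwise_limit dY fs f.
Proof.
  split.
  - intros hB. destruct (classic (inhabited X)) as [[x0]|HX].
    + destruct (baire_class1_closed_cover dX dY hY hsep f (f x0) hB)
        as (q & r & C & HC & Hnear & Hfine).
      exists (approx X Y dX dY (f x0) q r C). split.
      * intros k. exact (approx_full X Y dX dY hX (f x0) q r C k).
      * exact (approx_limit X Y dX dY hX hY f (f x0) q r C HC Hnear Hfine).
    + exists (fun _ => f).
      split; [intros n; split; [exists nil|intros y; exists 1; split; [lra|]]|];
        intros x; exfalso; exact (HX (inhabits x)).
  - intros [fs [Hfull Hlim]]. exact (full_limit_baire_class1 dX dY hY f fs Hfull Hlim).
Qed.
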